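(* For every $\tau\in\mathbb{Z}$ and every integer $m\geq1$, \[ (-1)^{m\tau}\sum_{|\nu|=m}\frac{1}{\mathfrak{z}_\nu}\,\frac{\{m\tau\nu\}\,\{\nu\}_a}{\{\nu\}}\ \in\ \mathbb{Z}[q^{\pm\frac12},a^{\pm\frac12}]. \] Equivalently, for $\tau\neq0$, $\{m\}\{m\tau\}\mathcal{Z}_m(q,a)\in\mathbb{Z}[q^{\pm\frac12},a^{\pm\frac12}]$.
   Context: $\{n\}_x=x^{n/2}-x^{-n/2}$, $\{n\}=\{n\}_q$; for a partition $\nu=(\nu_1,\dots,\nu_\ell)$ of $m$: $\{\nu\}_x=\prod_i\{\nu_i\}_x$, $\{\nu\}=\{\nu\}_q$, $\{m\tau\nu\}=\prod_i\{m\tau\nu_i\}$; $\mathfrak{z}_\nu=\prod_j j^{k_j}k_j!$ with $k_j$ the number of parts equal to $j$. For $\tau\neq0$, $\mathcal{Z}_m(q,a)=(-1)^{m\tau}\sum_{|\nu|=m}\frac{1}{\mathfrak{z}_\nu}\frac{\{m\nu\tau\}}{\{m\}\{m\tau\}}\frac{\{\nu\}_a}{\{\nu\}}$, so the displayed sum equals $\{m\}\{m\tau\}\mathcal{Z}_m(q,a)$. *)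

From HB Require Import structures.
From mathcomp Require Import all_boot all_order all_algebra fraction.
Set Implicit Arguments. Unset Strict Implicit. Unset Printing Implicit Defensive.
Import Order.TTheory GRing.Theory Num.Theory.
Local Open Scope ring_scope.

(* The field Q(q^{1/2}, a^{1/2}) of rational functions in two independent
   indeterminates: fractions of bivariate polynomials {poly {poly rat}}.
   The inner variable stands for q^{1/2}, the outer one for a^{1/2}. *)
Definition RF : fieldType := {fraction {poly {poly rat}}}.

Definition qh : RF := tofrac ((('X : {poly rat})%:P) : {poly {poly rat}}).
Definition ah : RF := tofrac ('X : {poly {poly rat}}).

(* {n}_x = x^{n/2} - x^{-n/2}, written with X = x^{1/2} and n : int *)
Definition qbr (X : RF) (n : int) : RF := X ^ n - X ^ (- n).

(* They are enumerated via their zero-padded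
   length-m versions (functions 'I_m -> 'I_(m+1)), which are exactly the
   nonincreasing sequences of naturals <= m of length m summing to m. *)
Definition is_partition (m : nat) (s : seq nat) : bool :=
  [&& sorted geq s, all (fun x => 0 < x)%N s & sumn s == m].

Definition padded (m : nat) (f : {ffun 'I_m -> 'I_m.+1}) : seq nat :=
  [seq val (f i) | i <- enum 'I_m].

Definition partitions (m : nat) : seq (seq nat) :=
  [seq [seq x <- padded f | (0 < x)%N]
   | f <- enum {ffun 'I_m -> 'I_m.+1}
   & sorted geq (padded f) && (sumn (padded f) == m)].

Definition zee (nu : seq nat) : nat :=
  \prod_(j <- undup nu) (j ^ count_mem j nu * (count_mem j nu)`!)%N.

Definition Zsum (m : nat) (tau : int) : RF :=
  (-1) ^ (m%:Z * tau) *
  \sum_(nu <- partitions m)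
     ((zee nu)%:R^-1 *
      (\prod_(i <- nu) qbr qh (m%:Z * tau * i%:Z)) *
      (\prod_(i <- nu) qbr ah i%:Z) /
      (\prod_(i <- nu) qbr qh i%:Z)).

Definition laurent_int (x : RF) : Prop :=
  exists (P : {poly {poly int}}) (k l : nat),
    x = tofrac (map_poly (map_poly intr) P : {poly {poly rat}})
        / (qh ^+ k * ah ^+ l).

(* Write {n}_x = X^n - X^-n with X = x^(1/2).  For N = m tau >= 0 the
   quotient {N k}/{k} is the geometric sum sum_(i < N) q^(k (N-1-2i)/2), so
   g k := {N k} {k}_a / {k} = p_k(u) - p_k(v) is a difference of power sums
   of the Laurent monomials u_i = q^((N-1-2i)/2) a^(1/2) and
   v_i = q^((N-1-2i)/2) a^(-1/2); for N < 0, g changes sign and u, v swap.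
   Up to the sign (-1)^(m tau), the sum over partitions nu of m of
   g_nu / z_nu is the coefficient of X^m in
   exp (sum_k g k X^k / k) = prod_i (1 - v_i X) / prod_i (1 - u_i X),
   which is an integer polynomial in the u_i and v_i.  Both sides are
   pinned down by the Newton recursion n S_n = sum_(0 < i <= n) g i S_(n-i),
   i.e. by X F' = G F modulo X^(m+1). *)

From HB Require Import structures.
From mathcomp Require Import all_boot all_order all_algebra fraction.
From mathcomp Require Import zify ring.
Set Implicit Arguments. Unset Strict Implicit. Unset Printing Implicit Defensive.
Import Order.TTheory GRing.Theory Num.Theory.
Local Open Scope ring_scope.

(** * Partitions *)

Lemma geq_trans : transitive geq. Proof. exact: rev_trans leq_trans. Qed.
Lemma geq_total : total geq. Proof. by move=> m n; apply: leq_total. Qed.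
Lemma geq_anti : antisymmetric geq.
Proof. by move=> m n le_mn; apply/anti_leq; rewrite andbC. Qed.

Lemma sumn_filter_pos s : sumn [seq x <- s | (0 < x)%N] = sumn s.
Proof. by elim: s => //= -[|x] s /= ->. Qed.

Lemma size_le_sumn s : all (fun x => 0 < x)%N s -> (size s <= sumn s)%N.
Proof. by elim: s => //= x s IHs /andP[x_gt0 /IHs]; lia. Qed.

Lemma mem_le_sumn s x : x \in s -> (x <= sumn s)%N.
Proof. by elim: s => //= y s IHs; rewrite in_cons => /orP[/eqP->|/IHs]; lia. Qed.

Lemma sorted_geq_pad s : sorted geq s ->
  s = [seq x <- s | (0 < x)%N] ++ nseq (size s - size [seq x <- s | (0 < x)%N]) 0%N.
Proof.
elim: s => //= x s IHs s_sorted; case: x s_sorted => [|x] s_sorted /=.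
  have /all_pred1P s0 : all (pred1 0%N) s.
    by apply/allP => y /(allP (order_path_min geq_trans s_sorted)); rewrite /= leqn0.
  by rewrite s0 filter_nseq !size_nseq.
by rewrite {1}(IHs (path_sorted s_sorted)) subSS.
Qed.

Lemma size_padded m f : size (@padded m f) = m.
Proof. by rewrite size_map size_enum_ord. Qed.

Lemma padded_inj m : {in [pred f | sorted geq (@padded m f)] &,
  injective (fun f => [seq x <- padded f | (0 < x)%N])}.
Proof.
move=> f1 f2 sorted1 sorted2 eq_pos.
have : padded f1 = padded f2.
  by rewrite (sorted_geq_pad sorted1) (sorted_geq_pad sorted2) eq_pos !size_padded.
move/eq_in_map => eq_f; apply/ffunP => i; apply/val_inj; exact: eq_f (mem_enum _ i).
Qed.

Lemma padded_of_partition m s : is_partition m s ->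
  exists f : {ffun 'I_m -> 'I_m.+1}, padded f = s ++ nseq (m - size s) 0%N.
Proof.
case/and3P => _ s_pos /eqP s_sum.
have size_s : (size s <= m)%N by rewrite -s_sum size_le_sumn.
exists [ffun i : 'I_m => inord (nth 0%N s i)].
apply: (@eq_from_nth _ 0%N); first by rewrite size_padded size_cat size_nseq subnKC.
move=> i; rewrite size_padded => lt_im.
rewrite /padded (nth_map (Ordinal lt_im)) ?size_enum_ord // ffunE /= nth_enum_ord //.
rewrite inordK; last first.
  case: (ltnP i (size s)) => [lt_is|le_si]; last by rewrite nth_default.
  by rewrite ltnS -s_sum mem_le_sumn ?mem_nth.
rewrite nth_cat; case: ltnP => // le_si.
by rewrite nth_nseq if_same nth_default.
Qed.

Lemma mem_partitions m s : (s \in partitions m) = is_partition m s.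
Proof.
apply/idP/idP.
  case/mapP => f; rewrite mem_filter => /andP[/andP[f_sorted /eqP f_sum] _] ->.
  rewrite /is_partition sorted_filter ?filter_all ?sumn_filter_pos ?f_sum ?eqxx //.
  exact: geq_trans.
move=> s_part; have [f f_pad] := padded_of_partition s_part.
case/and3P: s_part => s_sorted s_pos /eqP s_sum.
apply/mapP; exists f; last by rewrite f_pad filter_cat filter_nseq cats0; apply/esym/all_filterP.
rewrite mem_filter mem_enum andbT f_pad sumn_cat sumn_nseq addn0 s_sum eqxx andbT.
rewrite (sorted_pairwise geq_trans) pairwise_cat -!(sorted_pairwise geq_trans) s_sorted /=.
apply/andP; split; first by apply/allrelP => x y _ /nseqP[-> _].
by elim: (m - size s)%N => //= -[|k] //= ->.
Qed.

Lemma uniq_partitions m : uniq (partitions m).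
Proof.
rewrite map_inj_in_uniq; first by rewrite filter_uniq // enum_uniq.
by move=> f1 f2; rewrite !mem_filter => /andP[/andP[? _] _] /andP[/andP[? _] _]; apply: padded_inj.
Qed.

Lemma perm_partitions0 : perm_eq (partitions 0) [:: [::]].
Proof.
apply: uniq_perm; rewrite ?uniq_partitions // => s.
rewrite mem_partitions inE; apply/and3P/eqP => [[_ s_pos /eqP]|-> //].
by case: s s_pos => //= x s /andP[x_gt0 _]; lia.
Qed.

Lemma perm_partitions_with_part n j : (0 < j <= n)%N ->
  perm_eq [seq nu <- partitions n | j \in nu]
          [seq sort geq (j :: mu) | mu <- partitions (n - j)].
Proof.
move=> /andP[j_gt0 le_jn].
have sort_eq := sorted_eq geq_trans geq_anti.
apply: uniq_perm; first by rewrite filter_uniq ?uniq_partitions.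
  rewrite map_inj_in_uniq ?uniq_partitions // => mu1 mu2.
  rewrite !mem_partitions => /and3P[sorted1 _ _] /and3P[sorted2 _ _] eq_sort.
  apply: sort_eq => //; rewrite -(perm_cons j) -(perm_sort geq (j :: mu1)) eq_sort.
  exact: permEl (perm_sort _ _).
move=> nu; rewrite mem_filter; apply/andP/mapP.
  case=> j_nu; rewrite mem_partitions => /and3P[nu_sorted nu_pos /eqP nu_sum].
  exists (rem j nu).
    rewrite mem_partitions; apply/and3P; split.
    - exact: (subseq_sorted geq_trans (rem_subseq j nu) nu_sorted).
    - by apply/allP => x /mem_rem; apply: (allP nu_pos).
    - by rewrite -nu_sum (perm_sumn (perm_to_rem j_nu)) /= addKn.
  apply: sort_eq => //; first exact: sort_sorted geq_total _.
  by rewrite perm_sym perm_sort perm_sym perm_to_rem.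
case=> mu; rewrite mem_partitions => /and3P[mu_sorted mu_pos /eqP mu_sum] ->.
split; first by rewrite mem_sort mem_head.
rewrite mem_partitions; apply/and3P; split.
- exact: sort_sorted geq_total _.
- by rewrite (perm_all _ (permEl (perm_sort _ _))) /= j_gt0.
- by rewrite (perm_sumn (permEl (perm_sort _ _))) /= mu_sum subnKC.
Qed.

Lemma sumn_count_mem s : (\sum_(j <- undup s) j * count_mem j s)%N = sumn s.
Proof.
rewrite sumnE -(big_undup_iterop_count addn s xpredT id).
by apply: eq_bigr => j _; rewrite Monoid.iteropE iter_addn_0 mulnC.
Qed.

Lemma sum_count_mem_partition n nu : is_partition n nu ->
  (\sum_(1 <= j < n.+1 | j \in nu) j * count_mem j nu)%N = n.
Proof.
case/and3P => _ nu_pos /eqP nu_sum; rewrite -[in RHS]nu_sum -sumn_count_mem -big_filter.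
apply/esym/perm_big/uniq_perm; rewrite ?undup_uniq ?filter_uniq ?iota_uniq // => j.
rewrite mem_undup mem_filter mem_iota; case: (boolP (j \in nu)) => //= j_nu.
by rewrite (allP nu_pos) //= add1n subn1 ltnS -nu_sum mem_le_sumn.
Qed.

(** * Cycle-index sums and truncated exponentials *)

Lemma zee_on s U : uniq U -> {subset s <= U} ->
  zee s = \prod_(j <- U) (j ^ count_mem j s * (count_mem j s)`!)%N.
Proof.
move=> U_uniq sU; rewrite /zee [in RHS](bigID (mem s)) /=.
rewrite [X in _ * X]big1 ?mulr1; last by move=> j /count_memPn->.
rewrite -[in RHS]big_filter; apply: perm_big.
apply: uniq_perm; rewrite ?undup_uniq ?filter_uniq // => j.
by rewrite mem_undup mem_filter; case: (boolP (j \in s)) => // /sU.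
Qed.

Lemma zee_cons j s : zee (j :: s) = (j * (count_mem j s).+1 * zee s)%N.
Proof.
have U_uniq := undup_uniq (j :: s).
rewrite (zee_on U_uniq) => [|x]; last by rewrite mem_undup.
rewrite (zee_on U_uniq) => [|x x_s]; last by rewrite mem_undup in_cons x_s orbT.
rewrite !(bigD1_seq j) ?mem_undup ?mem_head //= mulnA; congr (_ * _)%N.
  by rewrite eqxx add1n expnS factS; ring.
by apply: eq_bigr => i /negbTE ne_ij; rewrite eq_sym ne_ij.
Qed.

Lemma zee_perm s t : perm_eq s t -> zee s = zee t.
Proof.
move=> eq_st; have eq_undup : perm_eq (undup s) (undup t).
  by apply: uniq_perm; rewrite ?undup_uniq // => x; rewrite !mem_undup (perm_mem eq_st).
by rewrite /zee (perm_big _ eq_undup); apply: eq_bigr => j _; rewrite (permP eq_st).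
Qed.

Section CharZero.

Variable F : fieldType.
Hypothesis F_pchar0 : [pchar F] =i pred0.

Lemma natf_neq0 n : (0 < n)%N -> n%:R != 0 :> F.
Proof. by rewrite lt0n (pcharf0P _).1. Qed.

Section CycleSum.

Variable g : nat -> F.

Definition cycle_weight nu : F := (zee nu)%:R^-1 * \prod_(i <- nu) g i.

Definition cycle_sum n : F := \sum_(nu <- partitions n) cycle_weight nu.

Lemma cycle_weight_perm s t : perm_eq s t -> cycle_weight s = cycle_weight t.
Proof. by move=> eq_st; rewrite /cycle_weight (zee_perm eq_st) (perm_big _ eq_st). Qed.

Lemma cycle_weight_cons j s : (0 < j)%N ->
  cycle_weight (j :: s) * (j * (count_mem j s).+1)%:R = g j * cycle_weight s.
Proof.
move=> j_gt0; have : (j * (count_mem j s).+1)%:R != 0 :> F by rewrite natf_neq0 ?muln_gt0 ?j_gt0.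
rewrite /cycle_weight zee_cons big_cons.
by move=> nz; rewrite natrM invfM [LHS]mulrC !mulrA mulfV // mul1r; ring.
Qed.

Lemma cycle_sum0 : cycle_sum 0 = 1.
Proof.
rewrite /cycle_sum (perm_big _ perm_partitions0) big_seq1.
by rewrite /cycle_weight /zee !big_nil invr1 mulr1.
Qed.

Lemma cycle_sum_with_part n j : (0 < j <= n)%N ->
  \sum_(nu <- partitions n | j \in nu) cycle_weight nu * (j * count_mem j nu)%:R =
  g j * cycle_sum (n - j).
Proof.
move=> j_range; have /andP[j_gt0 _] := j_range.
rewrite -big_filter (perm_big _ (perm_partitions_with_part j_range)) big_map.
rewrite /cycle_sum mulr_sumr; apply: eq_bigr => mu _.
have sort_mu := permEl (perm_sort geq (j :: mu)).
by rewrite (cycle_weight_perm sort_mu) (permP sort_mu) /= eqxx add1n cycle_weight_cons.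
Qed.

Lemma cycle_sum_newton n :
  n%:R * cycle_sum n = \sum_(1 <= j < n.+1) g j * cycle_sum (n - j).
Proof.
under eq_big_nat => j j_range do rewrite -cycle_sum_with_part //.
rewrite /cycle_sum mulr_sumr.
under [RHS]eq_bigr do rewrite big_mkcond.
rewrite exchange_big /=; apply: eq_big_seq => nu; rewrite mem_partitions => nu_part.
by rewrite -big_mkcond -mulr_sumr -natr_sum (sum_count_mem_partition nu_part) mulrC.
Qed.

End CycleSum.

Lemma dvdp_XnP M (p : {poly F}) :
  reflect (forall k, (k < M)%N -> p`_k = 0) ('X^M %| p).
Proof.
apply: (iffP (dvdpP _ _)) => [[q ->] k lt_kM | p_low]; first by rewrite coefMXn lt_kM.
exists (drop_poly M p); rewrite -[LHS](poly_take_drop M) -[RHS]add0r; congr (_ + _).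
by apply/polyP => k; rewrite coef_take_poly coef0; case: ifP => // /p_low.
Qed.

(* [P] is exp (\sum_(k > 0) G_k X^k / k) modulo [X^M] (when [G_0 = 0]): the
   exponential is characterised by [P_0 = 1] and [X P' = G P]. *)
Definition exp_series_mod M (G P : {poly F}) :=
  P`_0 = 1 /\ 'X^M %| P^`() * 'X - G * P.

Lemma coef_derivMX (P : {poly F}) n : (P^`() * 'X)`_n = n%:R * P`_n.
Proof. by rewrite coefMX coef_deriv; case: n => [|n] /=; rewrite ?mul0r // mulr_natl. Qed.

Lemma exp_series_modP M G P : exp_series_mod M G P <->
  P`_0 = 1 /\ forall n, (n < M)%N -> n%:R * P`_n = (G * P)`_n.
Proof.
split=> -[P0 hP]; split=> //.
  move=> n lt_nM; apply/subr0_eq; rewrite -coef_derivMX -coefB.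
  exact: (dvdp_XnP _ _ hP).
by apply/dvdp_XnP => n lt_nM; rewrite coefB coef_derivMX hP // subrr.
Qed.

Lemma exp_series_mod1 M : exp_series_mod M 0 1.
Proof. by rewrite /exp_series_mod coef1 derivC !mul0r subr0 dvdp0. Qed.

Lemma exp_series_modM M G1 G2 P1 P2 : exp_series_mod M G1 P1 ->
  exp_series_mod M G2 P2 -> exp_series_mod M (G1 + G2) (P1 * P2).
Proof.
move=> [P1_0 dvd1] [P2_0 dvd2]; split; first by rewrite coef0M P1_0 P2_0 mulr1.
have -> : (P1 * P2)^`() * 'X - (G1 + G2) * (P1 * P2) =
    (P1^`() * 'X - G1 * P1) * P2 + P1 * (P2^`() * 'X - G2 * P2).
  by rewrite derivM; ring.
by apply: dvdp_add; [apply: dvdp_mulr | apply: dvdp_mull].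
Qed.

Lemma exp_series_mod_prod (I : Type) M (r : seq I) (G P : I -> {poly F}) :
  (forall i, exp_series_mod M (G i) (P i)) ->
  exp_series_mod M (\sum_(i <- r) G i) (\prod_(i <- r) P i).
Proof.
move=> GP; apply: (big_rec2 (exp_series_mod M)); first exact: exp_series_mod1.
by move=> i G' P' _; apply: exp_series_modM.
Qed.

Lemma exp_series_mod_congr M G1 G2 P : 'X^M %| G1 - G2 ->
  exp_series_mod M G1 P -> exp_series_mod M G2 P.
Proof.
move=> dvdG [P0 dvd1]; split=> //.
have -> : P^`() * 'X - G2 * P = (P^`() * 'X - G1 * P) + (G1 - G2) * P by ring.
by apply: dvdp_add => //; apply: dvdp_mulr.
Qed.

Lemma exp_series_mod_uniq M (G P1 P2 : {poly F}) : G`_0 = 0 ->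
  exp_series_mod M G P1 -> exp_series_mod M G P2 -> 'X^M %| P1 - P2.
Proof.
move=> G0 /exp_series_modP[P1_0 rec1] /exp_series_modP[P2_0 rec2].
apply/dvdp_XnP; elim/ltn_ind => -[|k] IHk lt_kM; rewrite coefB.
  by rewrite P1_0 P2_0 subrr.
apply/eqP; rewrite subr_eq0 -(inj_eq (mulfI (natf_neq0 (ltn0Sn k)))) rec1 // rec2 //.
rewrite !coefM !(big_ord_recl k.+1) G0 !mul0r !add0r; apply/eqP/eq_bigr => i _.
congr (_ * _); apply/subr0_eq; rewrite -coefB IHk //= subSS ?ltnS ?leq_subr //.
exact: leq_ltn_trans (leq_subr _ _) (ltnW lt_kM).
Qed.

Definition geom_poly M (y : F) : {poly F} := \poly_(i < M) y ^+ i.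

Lemma exp_series_mod_geom M y : (0 < M)%N ->
  exp_series_mod M (geom_poly M y - 1) (geom_poly M y).
Proof.
move=> M_gt0; apply/exp_series_modP; split=> [|n lt_nM]; first by rewrite coef_poly M_gt0.
rewrite coefM big_ord_recl coefB coef1 !coef_poly lt_nM M_gt0 subrr mul0r add0r.
rewrite (eq_bigr (fun=> y ^+ n)) ?sumr_const ?card_ord ?mulr_natl // => i _.
rewrite lift0 coefB coef1 subr0 !coef_poly (leq_ltn_trans (ltn_ord i) lt_nM).
by rewrite (leq_ltn_trans (leq_subr _ _) lt_nM) -exprD subnKC.
Qed.

Lemma exp_series_mod_linear M z : (0 < M)%N ->
  exp_series_mod M (1 - geom_poly M z) (1 - z *: 'X).
Proof.
move=> M_gt0; apply/exp_series_modP; split=> [|n lt_nM].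
  by rewrite coefB coef1 coefZ coefX mulr0 subr0.
rewrite mulrBr mulr1 -scalerAr !coefB !coefZ coefMX !coefB !coef1 !coefX !coef_poly.
by case: n lt_nM => [|[|n]] lt_nM /=; rewrite ?M_gt0 ?lt_nM ?(ltnW lt_nM) ?exprS ?expr0; ring.
Qed.

Lemma exp_series_mod_cycle_sum M (g : nat -> F) : (0 < M)%N -> g 0 = 0 ->
  exp_series_mod M (\poly_(i < M) g i) (\poly_(i < M) cycle_sum g i).
Proof.
move=> M_gt0 g0; apply/exp_series_modP; split=> [|n lt_nM].
  by rewrite coef_poly M_gt0 cycle_sum0.
rewrite coef_poly lt_nM cycle_sum_newton big_add1 /= big_mkord coefM big_ord_recl.
rewrite coef_poly M_gt0 g0 mul0r add0r; apply: eq_bigr => i _.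
by rewrite lift0 !coef_poly (leq_ltn_trans (ltn_ord i) lt_nM) (leq_ltn_trans (leq_subr _ _) lt_nM).
Qed.

Lemma cycle_sum_power_sums (g : nat -> F) (ps ns : seq F) m : g 0 = 0 ->
  (forall k, (0 < k)%N -> g k = \sum_(y <- ps) y ^+ k - \sum_(z <- ns) z ^+ k) ->
  cycle_sum g m = (\prod_(y <- ps) geom_poly m.+1 y * \prod_(z <- ns) (1 - z *: 'X))`_m.
Proof.
move=> g0 g_psum.
set G := \sum_(y <- ps) (geom_poly m.+1 y - 1) + \sum_(z <- ns) (1 - geom_poly m.+1 z).
set P := _ * _.
have G_exp : exp_series_mod m.+1 G P.
  by apply: exp_series_modM; apply: exp_series_mod_prod => y;
    [apply: exp_series_mod_geom | apply: exp_series_mod_linear].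
have G_low : 'X^(m.+1) %| G - \poly_(i < m.+1) g i.
  apply/dvdp_XnP => k lt_km; rewrite coefB coefD !coef_sum coef_poly lt_km.
  have coef_geom y : (geom_poly m.+1 y)`_k = y ^+ k by rewrite coef_poly lt_km.
  under eq_bigr do rewrite coefB coef_geom coef1.
  under [X in _ + X - _]eq_bigr do rewrite coefB coef_geom coef1.
  case: k lt_km {coef_geom} => [|k] lt_km /=.
    by rewrite g0 !big1 ?addr0 ?subrr // => y _; rewrite expr0 subrr.
  by rewrite !sumrB !big1_eq g_psum // subr0 sub0r subrr.
have g_exp := exp_series_mod_cycle_sum (ltn0Sn m) g0.
have G0 : (\poly_(i < m.+1) g i)`_0 = 0 by rewrite coef_poly g0.
have /dvdp_XnP := exp_series_mod_uniq G0 g_exp (exp_series_mod_congr G_low G_exp).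
by move/(_ m (ltnSn m)); rewrite coefB coef_poly ltnSn => /subr0_eq.
Qed.

End CharZero.

(** * Laurent polynomials with integer coefficients *)

Lemma pchar_RF : [pchar RF] =i pred0.
Proof.
move=> p; apply/negP; rewrite inE => /andP[p_prime].
rewrite -(rmorph_nat (@tofrac _)) tofrac_eq0 => p0.
have : p \in [pchar {poly {poly rat}}] by rewrite inE p_prime p0.
by rewrite !pchar_poly pchar_num.
Qed.

Definition embed : {rmorphism {poly {poly int}} -> RF} :=
  (@tofrac _) \o map_poly (map_poly intr).

Lemma laurent_intE x :
  laurent_int x = exists P k l, x = embed P / (qh ^+ k * ah ^+ l).
Proof. by []. Qed.

Definition monomial k l : {poly {poly int}} := 'X%:P ^+ k * 'X ^+ l.

Lemma embed_monomial k l : embed (monomial k l) = qh ^+ k * ah ^+ l.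
Proof. by rewrite rmorphM !rmorphXn /= map_polyC /= !map_polyX. Qed.

Lemma qh_neq0 : qh != 0.
Proof. by rewrite tofrac_eq0 polyC_eq0 polyX_eq0. Qed.

Lemma ah_neq0 : ah != 0.
Proof. by rewrite tofrac_eq0 polyX_eq0. Qed.

Lemma monomial_neq0 k l : qh ^+ k * ah ^+ l != 0.
Proof. exact: mulf_neq0 (expf_neq0 _ qh_neq0) (expf_neq0 _ ah_neq0). Qed.

Lemma laurent_int_embed P : laurent_int (embed P).
Proof. by exists P, 0%N, 0%N; rewrite !expr0 mulr1 divr1. Qed.

Lemma laurent_intD x y : laurent_int x -> laurent_int y -> laurent_int (x + y).
Proof.
rewrite !laurent_intE => -[P [k [l ->]]] [Q [k' [l' ->]]].
exists (P * monomial k' l' + Q * monomial k l), (k + k')%N, (l + l')%N.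
rewrite rmorphD (rmorphM embed P) (rmorphM embed Q) !embed_monomial !exprD mulrACA.
exact: addf_div (monomial_neq0 k l) (monomial_neq0 k' l').
Qed.

Lemma laurent_intM x y : laurent_int x -> laurent_int y -> laurent_int (x * y).
Proof.
rewrite !laurent_intE => -[P [k [l ->]]] [Q [k' [l' ->]]].
by exists (P * Q), (k + k')%N, (l + l'); rewrite rmorphM mulf_div !exprD mulrACA.
Qed.

Lemma laurent_intN x : laurent_int x -> laurent_int (- x).
Proof.
by rewrite !laurent_intE => -[P [k [l ->]]]; exists (- P), k, l; rewrite rmorphN mulNr.
Qed.

Lemma laurent_int0 : laurent_int 0.
Proof. by rewrite -(rmorph0 embed); apply: laurent_int_embed. Qed.

Lemma laurent_int1 : laurent_int 1.
Proof. by rewrite -(rmorph1 embed); apply: laurent_int_embed. Qed.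

Lemma laurent_int_sum (I : Type) (r : seq I) (P : pred I) (f : I -> RF) :
  (forall i, P i -> laurent_int (f i)) -> laurent_int (\sum_(i <- r | P i) f i).
Proof.
by move=> f_int; apply: big_ind => //; [exact: laurent_int0 | exact: laurent_intD].
Qed.

Lemma laurent_intX x n : laurent_int x -> laurent_int (x ^+ n).
Proof.
move=> x_int; elim: n => [|n IHn]; first by rewrite expr0; apply: laurent_int1.
by rewrite exprS; apply: laurent_intM.
Qed.

Lemma laurent_intXz x (z : int) :
  laurent_int x -> laurent_int x^-1 -> laurent_int (x ^ z).
Proof.
by case: z => n x_int xV_int; rewrite ?NegzE -?exprz_inv; apply: laurent_intX.
Qed.

Lemma laurent_int_monomial k l : laurent_int (qh ^+ k * ah ^+ l).
Proof. by rewrite -embed_monomial; apply: laurent_int_embed. Qed.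

Lemma laurent_int_monomialV k l : laurent_int (qh ^+ k * ah ^+ l)^-1.
Proof. by exists 1, k, l; rewrite rmorph1 div1r. Qed.

Lemma laurent_int_qh : laurent_int qh.
Proof. by have := laurent_int_monomial 1 0; rewrite expr1 expr0 mulr1. Qed.

Lemma laurent_int_qhV : laurent_int qh^-1.
Proof. by have := laurent_int_monomialV 1 0; rewrite expr1 expr0 mulr1. Qed.

Lemma laurent_int_ah : laurent_int ah.
Proof. by have := laurent_int_monomial 0 1; rewrite expr1 expr0 mul1r. Qed.

Lemma laurent_int_ahV : laurent_int ah^-1.
Proof. by have := laurent_int_monomialV 0 1; rewrite expr1 expr0 mul1r. Qed.

Lemma laurent_int_natr n : laurent_int n%:R.
Proof. by rewrite -(rmorph_nat embed); apply: laurent_int_embed. Qed.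

Lemma laurent_int_coef_prod (r : seq RF) (P : RF -> {poly RF}) :
  (forall y k, y \in r -> laurent_int (P y)`_k) ->
  forall k, laurent_int (\prod_(y <- r) P y)`_k.
Proof.
move=> P_int; rewrite big_seq.
apply: (big_ind (fun p : {poly RF} => forall k, laurent_int p`_k)) => [k|p q p_int q_int k|y y_r k].
- by rewrite coef1; apply: laurent_int_natr.
- by rewrite coefM; apply: laurent_int_sum => i _; apply: laurent_intM.
- exact: P_int.
Qed.

Lemma laurent_int_cycle_sum (g : nat -> RF) (ps ns : seq RF) m : g 0 = 0 ->
  (forall k, (0 < k)%N -> g k = \sum_(y <- ps) y ^+ k - \sum_(z <- ns) z ^+ k) ->
  {in ps, forall y, laurent_int y} -> {in ns, forall z, laurent_int z} ->
  laurent_int (cycle_sum g m).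
Proof.
move=> g0 g_psum ps_int ns_int; rewrite (cycle_sum_power_sums pchar_RF m g0 g_psum) coefM.
apply: laurent_int_sum => i _; apply: laurent_intM; apply: laurent_int_coef_prod => y k y_r.
  rewrite coef_poly; case: ifP => _; last exact: laurent_int0.
  by apply: laurent_intX; apply: ps_int.
rewrite coefB coefZ coef1 coefX; apply: laurent_intD; first exact: laurent_int_natr.
by apply/laurent_intN/laurent_intM; [apply: ns_int | apply: laurent_int_natr].
Qed.

(** * Power-sum expansion of the summands *)

Definition qbr_term (N : int) (k : nat) : RF := qbr qh (N * k%:Z) * qbr ah k%:Z / qbr qh k%:Z.

Lemma Zsum_cycle_sum m tau :
  Zsum m tau = (-1) ^ (m%:Z * tau) * cycle_sum (qbr_term (m%:Z * tau)) m.
Proof.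
rewrite /Zsum /cycle_sum; congr (_ * _); apply: eq_bigr => nu _.
by rewrite /cycle_weight /qbr_term !big_split /= prodfV !mulrA.
Qed.

Lemma qbr_term0 N : qbr_term N 0 = 0.
Proof. by rewrite /qbr_term /qbr mulr0 oppr0 subrr !mul0r. Qed.

Lemma qbr_termN N k : qbr_term (- N) k = - qbr_term N k.
Proof. by rewrite /qbr_term /qbr mulNr opprK -opprB !mulNr. Qed.

Lemma qbr_nat (X : RF) n : qbr X n%:Z = X ^+ n - X^-1 ^+ n.
Proof. by rewrite /qbr exprVn exprnN. Qed.

Lemma qbr_qh_neq0 k : (0 < k)%N -> qbr qh k%:Z != 0.
Proof.
move=> k_gt0; rewrite qbr_nat subr_eq0 exprVn; apply/negP => /eqP qhk_inv.
have : qh ^+ (k + k) = 1 by rewrite exprD {2}qhk_inv (mulfV (expf_neq0 _ qh_neq0)).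
rewrite -rmorphXn -(rmorph1 (@tofrac _)) => /eqP; rewrite tofrac_eq -polyC_exp -polyC1.
rewrite (inj_eq polyC_inj) => /eqP qX1.
by have := congr1 (fun p : {poly rat} => size p) qX1; rewrite size_polyXn size_poly1; lia.
Qed.

(* The monomials q^((n-1-2i)/2) c for i < n, whose k-th power sum times
   {k} is {n k} c^k. *)
Definition qmonos n (c : RF) := [seq qh ^+ (n.-1 - i) * qh^-1 ^+ i * c | i <- iota 0 n].

Lemma qbr_term_power_sums n k : (0 < k)%N ->
  qbr_term n%:Z k = \sum_(y <- qmonos n ah) y ^+ k - \sum_(y <- qmonos n ah^-1) y ^+ k.
Proof.
move=> k_gt0; have := qbr_qh_neq0 k_gt0; rewrite qbr_nat => qbr_neq0.
rewrite /qbr_term -PoszM !qbr_nat mulnC !exprM (subrXX (qh ^+ k)).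
set S := \sum_(i < n) _; rewrite mulrAC [_ * S * _]mulrAC (mulfV qbr_neq0) mul1r.
rewrite /qmonos; have -> : iota 0 n = index_iota 0 n by rewrite /index_iota subn0.
rewrite !big_map -sumrB mulr_suml big_mkord; apply: eq_bigr => i _.
by rewrite mulrBr !exprMn (exprAC qh) (exprAC qh^-1).
Qed.

Lemma laurent_int_qmonos n c : laurent_int c -> {in qmonos n c, forall y, laurent_int y}.
Proof.
move=> c_int _ /mapP[i _ ->]; apply: laurent_intM c_int; apply: laurent_intM.
  exact: laurent_intX laurent_int_qh.
exact: laurent_intX laurent_int_qhV.
Qed.

Theorem lemma4p18 (tau : int) (m : nat) :
  (1 <= m)%N -> laurent_int (Zsum m tau).
Proof.
move=> _; rewrite Zsum_cycle_sum; apply: laurent_intM.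
  by apply: laurent_intXz; rewrite ?invrN1; apply/laurent_intN/laurent_int1.
have ah_int n := @laurent_int_qmonos n _ laurent_int_ah.
have ahV_int n := @laurent_int_qmonos n _ laurent_int_ahV.
case: (m%:Z * tau) => n; last rewrite NegzE.
  exact: laurent_int_cycle_sum (qbr_term0 _) (qbr_term_power_sums n) (ah_int n) (ahV_int n).
apply: laurent_int_cycle_sum (qbr_term0 _) _ (ahV_int _) (ah_int _) => k k_gt0.
by rewrite qbr_termN qbr_term_power_sums // opprB.
Qed.
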